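(* Let $\mathcal{A}$ be a central S-ring over a finite group $G$. Then $\mathcal{A}$ is rational if and only if $\pi(\underline{X})\in\mathbb{Q}$ for all $\pi\in\mathrm{Irr}(\mathcal{A})$ and all basic sets $X\in\mathcal{S}(\mathcal{A})$.
   Context: For a finite group $G$ with identity $e$ and $X\subseteq G$, write $\underline{X}=\sum_{x\in X}x\in\mathbb{Z}G$. A subring $\mathcal{A}$ of $\mathbb{Z}G$ is an S-ring over $G$ if there is a partition $\mathcal{S}(\mathcal{A})$ of $G$ (basic sets) such that $\{e\}\in\mathcal{S}(\mathcal{A})$, $X\in\mathcal{S}(\mathcal{A})\Rightarrow X^{-1}\in\mathcal{S}(\mathcal{A})$, and $\mathcal{A}$ is the $\mathbb{Z}$-span of $\{\underline{X}: X\in\mathcal{S}(\mathcal{A})\}$. $\mathcal{A}$ is central if $\mathcal{A}\subseteq\mathcal{Z}(\mathbb{Z}G)$; a central S-ring is commutative. $\mathrm{Irr}(\mathcal{A})$ denotes the set of irreducible complex characters of $\mathcal{A}$, i.e. the nonzero ring homomorphisms $\mathcal{A}\to\mathbb{C}$ (equivalently, the $\mathbb{C}$-algebra homomorphisms $\mathbb{C}\otimes\mathcal{A}\to\mathbb{C}$); they are exactly the maps $\frac{1}{\chi(1)}\chi|_{\mathcal{A}}$ for $\chi$ an irreducible complex character of $G$ extended linearly to $\mathbb{Z}G$. For an integer $m$, $X^{(m)}=\{x^m:x\in X\}$. A central S-ring $\mathcal{A}$ is rational if $X^{(m)}=X$ for every basic set $X$ of $\mathcal{A}$ and every integer $m$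 coprime to $|G|$. *)

From HB Require Import structures.
From mathcomp Require Import all_boot all_order all_algebra all_fingroup all_field.
Set Implicit Arguments. Unset Strict Implicit. Unset Printing Implicit Defensive.
Import GRing.Theory Num.Theory.
Local Open Scope ring_scope.

Section SRing.
Variable gT : finGroupType.

(* The integral group ring ZG, modelled as integer-valued functions on G = gT
   (a = \sum_g a(g) g), with the convolution product. *)
Definition ZG := {ffun gT -> int}.

Definition zg_mul (a b : ZG) : ZG :=
  [ffun z => \sum_(x : gT) a x * b ((x^-1) * z)%g].

Definition und (X : {set gT}) : ZG := [ffun g => (g \in X)%:Z].

Definition in_span (S : {set {set gT}}) (a : ZG) : Prop :=
  exists c : {set gT} -> int, a = [ffun g => \sum_(Z in S) c Z * und Z g].

(* S is the set of basic sets of an S-ring over G (the S-ring being the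
   Z-span of the underlines of S, which must be a subring of ZG). *)
Definition is_Sring (S : {set {set gT}}) : Prop :=
  [/\ partition S [set: gT],
      [set 1%g] \in S,
      (forall X, X \in S -> [set x^-1 | x in X]%g \in S)
    & (forall X Y, X \in S -> Y \in S -> in_span S (zg_mul (und X) (und Y)))].

Definition central_Sring (S : {set {set gT}}) : Prop :=
  forall X, X \in S -> forall a : ZG, zg_mul (und X) a = zg_mul a (und X).

Definition zexpg (x : gT) (m : int) : gT :=
  match m with Posz n => (x ^+ n)%g | Negz n => (x ^- n.+1)%g end.

Definition set_pow (X : {set gT}) (m : int) : {set gT} := [set zexpg x m | x in X].

Definition rational_Sring (S : {set {set gT}}) : Prop :=
  forall X, X \in S -> forall m : int, coprimez m #|gT| -> set_pow X m = X.

(* phi is (the extension to ZG of) an element of Irr(A): its restriction to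
   A = Z-span of S is a nonzero ring homomorphism A -> C.  Values outside A
   are irrelevant. *)
Definition is_Irr (S : {set {set gT}}) (phi : ZG -> algC) : Prop :=
  [/\ (forall a b, in_span S a -> in_span S b -> phi (a + b) = phi a + phi b),
      (forall a b, in_span S a -> in_span S b -> phi (zg_mul a b) = phi a * phi b)
    & (exists2 a, in_span S a & phi a != 0)].

End SRing.

From HB Require Import structures.
From mathcomp Require Import all_boot all_order all_algebra all_fingroup all_field.
From mathcomp Require Import all_solvable all_character.
Set Implicit Arguments. Unset Strict Implicit. Unset Printing Implicit Defensive.
Import GRing.Theory Num.Theory.
Local Open Scope ring_scope.

(* A central S-ring A consists of class functions, so every irreducible
   character chi of G yields the character a |-> chi(a)/chi(1) of A (a class
   sum acts as a scalar in an irreducible representation), and these separate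
   the class functions.  For k coprime to |G| the Galois automorphism
   zeta |-> zeta^k of Q(zeta_|G|) maps chi(x) to chi(x^k); hence X^(k) = X for
   all such k exactly when every chi(X)/chi(1) is Galois-fixed, i.e. rational.
   An arbitrary pi in Irr(A) takes one of these rational values q_chi on X,
   because prod_chi (den q_chi X - num q_chi e) is killed by every
   chi(-)/chi(1), hence is 0 in ZG, so pi must kill one of its factors. *)

Section GroupRing.
Variable gT : finGroupType.
Implicit Types (a : ZG gT) (Z : {set gT}).

Definition class_zg a := forall g h, a (g ^ h)%g = a g.

Lemma zg_mul_und1l a h z : zg_mul (und [set h]) a z = a (h^-1 * z)%g.
Proof.
rewrite ffunE (bigD1 h) //= big1 ?addr0 => [|x /negbTE x'h].
  by rewrite ffunE set11 mul1r.
by rewrite ffunE inE x'h mul0r.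
Qed.

Lemma zg_mul_und1r a h z : zg_mul a (und [set h]) z = a (z * h^-1)%g.
Proof.
rewrite ffunE (bigD1 (z * h^-1)%g) //= big1 ?addr0 => [|x x'zh].
  by rewrite ffunE inE invMg invgK mulgKV eqxx mulr1.
rewrite ffunE inE; case: eqP => [Dh|]; last by rewrite mulr0.
by rewrite -Dh invMg invgK mulKVg eqxx in x'zh.
Qed.

Lemma zg_mul1 a : zg_mul (und [set 1%g]) a = a.
Proof. by apply/ffunP => z; rewrite zg_mul_und1l invg1 mul1g. Qed.

Lemma central_und_memJ Z : (forall a, zg_mul (und Z) a = zg_mul a (und Z)) ->
  forall g h, ((g ^ h)%g \in Z) = (g \in Z).
Proof.
move=> cZ g h; have := congr1 (fun a => a (h^-1 * g)%g) (cZ (und [set h^-1%g])).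
rewrite /= zg_mul_und1r zg_mul_und1l !ffunE invgK mulgA mulgV mul1g.
by rewrite /conjg mulgA => -[]; do 2 case: (_ \in Z).
Qed.

End GroupRing.

Section BlockConstant.
Variables (gT : finGroupType) (S : {set {set gT}}).
Implicit Types (a b : ZG gT) (Z : {set gT}).

Definition block_const a := forall Z, Z \in S -> {in Z &, forall x y, a x = a y}.

Lemma block_const0 : block_const 0.
Proof. by move=> Z _ x y _ _; rewrite !ffunE. Qed.

Lemma block_constD a b : block_const a -> block_const b -> block_const (a + b).
Proof. by move=> Ca Cb Z ZS x y xZ yZ; rewrite !ffunE (Ca Z ZS x y) ?(Cb Z ZS x y). Qed.

Lemma block_constN a : block_const a -> block_const (- a).
Proof. by move=> Ca Z ZS x y xZ yZ; rewrite !ffunE (Ca Z ZS x y). Qed.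

Lemma block_constMz a m : block_const a -> block_const (a *~ m).
Proof. by move=> Ca Z ZS x y xZ yZ; rewrite !ffunMzE (Ca Z ZS x y). Qed.

End BlockConstant.

Section BlockAdditive.
Variables (gT : finGroupType) (S : {set {set gT}}) (V : zmodType) (psi : ZG gT -> V).
Implicit Types (a b : ZG gT).

Hypothesis psiD : forall a b, block_const S a -> block_const S b ->
  psi (a + b) = psi a + psi b.

Lemma block_additive0 : psi 0 = 0.
Proof.
have := psiD (@block_const0 _ S) (@block_const0 _ S).
by rewrite addr0 -{1}[psi 0]addr0 => /addrI/esym.
Qed.

Lemma block_additiveN a : block_const S a -> psi (- a) = - psi a.
Proof.
move=> Ca; apply/eqP; rewrite -subr_eq0 opprK addrC -psiD ?subrr ?block_additive0 //.
exact: block_constN.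
Qed.

Lemma block_additiveMz a m : block_const S a -> psi (a *~ m) = psi a *~ m.
Proof.
have psiMn n : block_const S a -> psi (a *+ n) = psi a *+ n.
  move=> Ca; elim: n => [|n IHn]; first exact: block_additive0.
  by rewrite !mulrS psiD ?IHn //; exact: (block_constMz n Ca).
case: m => n Ca; first exact: psiMn.
by rewrite NegzE !mulrNz block_additiveN ?psiMn //; exact: (block_constMz n.+1 Ca).
Qed.

End BlockAdditive.

Section CentralCharacter.
Variables (gT : finGroupType) (i : Iirr [set: gT]%G).
Implicit Types (a b : ZG gT).

Definition irr_zg a : algC := \sum_g (a g)%:~R * 'chi_i g.
Definition central_char a : algC := irr_zg a / 'chi_i 1%g.
Definition irr_repr_zg a := \sum_g (a g)%:~R *: 'Chi_i g.

Lemma mxtrace_irr_repr_zg a : \tr (irr_repr_zg a) = irr_zg a.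
Proof.
rewrite raddf_sum; apply: eq_bigr => g _.
by rewrite /= mxtraceZ -irrRepr cfunE in_setT mulr1n.
Qed.

Lemma irr_repr_zgM a b : irr_repr_zg (zg_mul a b) = irr_repr_zg a *m irr_repr_zg b.
Proof.
rewrite /irr_repr_zg mulmx_suml.
under eq_bigr do rewrite ffunE rmorph_sum scaler_suml.
rewrite exchange_big /=; apply: eq_bigr => x _.
rewrite mulmx_sumr (reindex_inj (mulgI x)) /=; apply: eq_bigr => y _.
by rewrite mulKg rmorphM -scalerA -scalemxAl -scalemxAr repr_mxM ?in_setT.
Qed.

(* Schur's lemma: the image of a class function commutes with the irreducible
   representation, so it is a scalar, read off from its trace. *)
Lemma irr_repr_zg_scalar a : class_zg a -> irr_repr_zg a = (central_char a)%:M.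
Proof.
move=> Ja; have /is_scalar_mxP[c Dc]: is_scalar_mx (irr_repr_zg a).
  apply: mx_abs_irr_cent_scalar; first exact/groupC/socle_irr.
  apply/centgmxP => h _; rewrite /irr_repr_zg mulmx_suml mulmx_sumr.
  rewrite [RHS](reindex_inj (@conjg_inj _ h)) /=; apply: eq_bigr => g _.
  by rewrite Ja -scalemxAl -scalemxAr -!repr_mxM ?in_setT // /conjg mulKVg.
rewrite Dc /central_char -mxtrace_irr_repr_zg Dc mxtrace_scalar irr1_degree.
by rewrite -[c *+ _]mulr_natr mulfK // pnatr_eq0 -lt0n irr_degree_gt0.
Qed.

Fact central_char_is_zmod_morphism : zmod_morphism central_char.
Proof.
move=> a b; rewrite /central_char /irr_zg -mulrBl -sumrB; congr (_ / _).
by apply: eq_bigr => g _; rewrite !ffunE rmorphB mulrBl.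
Qed.

HB.instance Definition _ :=
  GRing.isZmodMorphism.Build (ZG gT) algC central_char central_char_is_zmod_morphism.

Lemma central_charM a b : class_zg a ->
  central_char (zg_mul a b) = central_char a * central_char b.
Proof.
move=> Ja; rewrite {1}/central_char -mxtrace_irr_repr_zg irr_repr_zgM.
by rewrite irr_repr_zg_scalar // mul_scalar_mx mxtraceZ mxtrace_irr_repr_zg mulrA.
Qed.

Lemma irr_zg_und X : irr_zg (und X) = \sum_(x in X) 'chi_i x.
Proof.
rewrite [RHS]big_mkcond; apply: eq_bigr => g _.
by rewrite ffunE; case: (g \in X); rewrite ?mul1r ?mul0r.
Qed.

Lemma central_char_und1 : central_char (und [set 1%g]) = 1.
Proof. by rewrite /central_char irr_zg_und big_set1 divff ?irr1_neq0. Qed.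

End CentralCharacter.

Lemma class_zg_eq0 (gT : finGroupType) (b : ZG gT) :
  class_zg b -> (forall i : Iirr [set: gT]%G, central_char i b = 0) -> b = 0.
Proof.
move=> Jb central_b0.
have irr_b0 i : irr_zg i b = 0.
  by rewrite -(divfK (irr1_neq0 i) (irr_zg i b)) [_ / _]central_b0 mul0r.
have Cb : is_class_fun <<[set: gT]>>%g [ffun g => (b g)%:~R].
  rewrite genGid; apply: intro_class_fun => [x y _ _ | x]; first by rewrite Jb.
  by rewrite in_setT.
pose phi : 'CF([set: gT]%G) := Cfun 0 Cb.
have phi0 : phi = 0.
  rewrite [phi]cfun_sum_cfdot big1 // => i _; rewrite cfdotE.
  have -> : \sum_(x in [set: gT]%G) phi x * ('chi_i x)^* = irr_zg (conjC_Iirr i) b.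
    apply: eq_big => [x|x _]; first by rewrite in_setT.
    by rewrite cfunE conjC_IirrE cfunE.
  by rewrite irr_b0 mulr0 scale0r.
apply/ffunP => g; have /eqP := congr1 (fun psi : 'CF([set: gT]%G) => psi g) phi0.
by rewrite /= !cfunE ffunE intr_eq0 => /eqP.
Qed.

Lemma expg_coprime_inj (gT : finGroupType) k :
  coprime k #|gT| -> injective (fun x : gT => x ^+ k)%g.
Proof.
move=> cok; have coGk : coprime #|[set: gT]%G| k by rewrite cardsT coprime_sym.
apply: (can_inj (g := fun x => x ^+ expg_invn [set: gT]%G k)%g) => x.
by rewrite expgK ?in_setT.
Qed.

Lemma zexpg_coprime (gT : finGroupType) (m : int) : coprimez m #|gT| ->
  exists2 k, coprime k #|gT| & forall x : gT, zexpg x m = (x ^+ k)%g.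
Proof.
have G_gt0 : (0 < #|gT|)%N by rewrite -cardsT cardG_gt0.
case: m => n co; first by exists n.
exists (#|gT|.-1 * n.+1)%N; first by rewrite coprimeMl coprimePn.
move=> x /=; apply: (mulIg (x ^+ n.+1)%g); rewrite mulVg -expgD.
rewrite -{2}(mul1n n.+1) -mulnDl addn1 prednK // expgM.
by rewrite -cardsT expg_cardG ?in_setT // expg1n.
Qed.

Lemma aut_unity_expn (nu : {rmorphism algC -> algC}) n : (0 < n)%N ->
  exists2 k, coprime k n & forall z, z ^+ n = 1 -> nu z = z ^+ k.
Proof.
move=> n_gt0; have [w prim_w] := C_prim_root_exists n_gt0.
have /(prim_rootP prim_w)[k Dk] : nu w ^+ n = 1.
  by rewrite -rmorphXn (prim_expr_order prim_w) rmorph1.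
exists k; first by rewrite -(prim_root_exp_coprime k prim_w) -Dk fmorph_primitive_root.
by move=> z /(prim_rootP prim_w)[j ->]; rewrite rmorphXn Dk -!exprM mulnC.
Qed.

(* On the cyclic group <[x]> the character is a sum of linear characters,
   whose values are #|G|-th roots of unity. *)
Lemma irr_aut_expg (gT : finGroupType) (G : {group gT}) (nu : {rmorphism algC -> algC}) k :
    (forall z, z ^+ #|G| = 1 -> nu z = z ^+ k) ->
  forall (i : Iirr G) x, x \in G -> nu ('chi_i x) = 'chi_i (x ^+ k)%g.
Proof.
move=> Dnu i x Gx; pose H := <[x]>%G; have sHG : H \subset G by rewrite cycle_subG.
rewrite -(cfResE _ sHG (cycle_id x)) -(cfResE _ sHG (mem_cycle x k)).
have [r ->] := char_sum_irr (cfRes_char H (irr_char i)).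
rewrite !sum_cfunE rmorph_sum; apply: eq_bigr => j _.
have lin_j : 'chi[H]_j \is a linear_char by apply/char_abelianP/cycle_abelian.
rewrite lin_charX ?cycle_id // Dnu //; have /dvdnP[q ->] := order_dvdG Gx.
by rewrite mulnC exprM lin_char_unity_root ?cycle_id // expr1n.
Qed.

Lemma irr_sum_rat (gT : finGroupType) (i : Iirr [set: gT]%G) (X : {set gT}) :
    (forall k, coprime k #|gT| -> [set x ^+ k | x in X]%g = X) ->
  \sum_(x in X) 'chi_i x \in Crat.
Proof.
move=> expX.
have [Qn galQn [QnC autQnC [_ _ QnC_chi]]] := group_num_field_exists [set: gT]%G.
have /all_sig[a Da] x : {a | QnC a = 'chi_i x}.
  by apply: QnC_chi; [exact: irr_char | rewrite order_dvdG ?in_setT].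
have : \sum_(x in X) a x \in fixedField ('Gal({:Qn} / 1%VS))%g.
  apply/fixedFieldP=> [|s _]; first exact: memvf.
  have [nu Dnu] := autQnC s; apply: (fmorph_inj QnC).
  have [k cok Dk] := aut_unity_expn nu (cardG_gt0 [set: gT]%G).
  rewrite cardsT in cok; rewrite Dnu !rmorph_sum.
  rewrite (eq_bigr (fun x => 'chi_i (x ^+ k)%g)) => [|x _]; last first.
    by rewrite Da (irr_aut_expg Dk) ?in_setT.
  rewrite -{2}(expX k cok) big_imset /=; last exact: in2W (expg_coprime_inj cok).
  by apply: eq_bigr => x _; rewrite Da.
rewrite (galois_fixedField galQn) => /vlineP[c Dc].
rewrite (eq_bigr (QnC \o a)) => [|x _]; last by rewrite /= Da.
by rewrite -rmorph_sum Dc alg_num_field fmorph_rat Crat_rat.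
Qed.

Lemma expg_set_irr_rat (gT : finGroupType) (X : {set gT}) k : coprime k #|gT| ->
    (forall g h, ((g ^ h)%g \in X) = (g \in X)) ->
    (forall i : Iirr [set: gT]%G, \sum_(x in X) 'chi_i x \in Crat) ->
  [set x ^+ k | x in X]%g = X.
Proof.
move=> cok JX ratX; set Y := [set _ | x in X].
have JY g h : ((g ^ h)%g \in Y) = (g \in Y).
  suff JY1 g1 h1 : g1 \in Y -> (g1 ^ h1)%g \in Y.
    by apply/idP/idP => [/(JY1 _ h^-1%g)|/JY1//]; rewrite conjgK.
  by case/imsetP => x xX ->; rewrite conjXg; apply: imset_f; rewrite JX.
have [nu Dnu] := Qn_aut_exists cok; rewrite -cardsT in Dnu.
have YX : und Y - und X = 0.
  apply: class_zg_eq0 => [g h | i]; first by rewrite !ffunE JX JY.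
  rewrite raddfB /= /central_char !irr_zg_und big_imset /=; last first.
    exact: in2W (expg_coprime_inj cok).
  rewrite (eq_bigr (nu \o 'chi_i)) => [|x _]; last first.
    by rewrite /= (irr_aut_expg Dnu) ?in_setT.
  by rewrite -rmorph_sum aut_Crat // subrr.
apply/setP => g; have /eqP := congr1 (fun b : ZG gT => b g) YX.
by rewrite !ffunE subr_eq0; do 2 case: (_ \in _).
Qed.

Lemma mulrz_denq_eq (F : numFieldType) (x : F) (r : rat) :
  (x *~ denq r == (numq r)%:~R) = (x == ratr r).
Proof.
by rewrite /ratr -[x in RHS]divr1 eqr_div ?oner_eq0 ?intr_eq0 ?denq_neq0 // mulr1 mulrzr.
Qed.

Section SRing.
Variables (gT : finGroupType) (S : {set {set gT}}).
Implicit Types (a b : ZG gT) (Z : {set gT}).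
Local Notation e := (und [set 1%g]).

Hypothesis partS : partition S [set: gT].

Lemma pblockS g : pblock S g \in S.
Proof. by case/and3P: partS => /eqP covS _ _; rewrite pblock_mem // covS inE. Qed.

Lemma mem_pblockS g : g \in pblock S g.
Proof. by case/and3P: partS => /eqP covS _ _; rewrite mem_pblock covS inE. Qed.

Lemma mem_block_eq Z Z' x y : Z \in S -> Z' \in S -> x \in Z -> y \in Z ->
  (x \in Z') = (y \in Z').
Proof.
case/and3P: partS => _ trivS _ ZS Z'S xZ yZ.
by apply/idP/idP=> /(def_pblock trivS Z'S) <-;
  rewrite ?(def_pblock trivS ZS xZ) ?(def_pblock trivS ZS yZ).
Qed.

Lemma und_block_const Z : Z \in S -> block_const S (und Z).
Proof. by move=> ZS Z' Z'S x y xZ' yZ'; rewrite !ffunE (mem_block_eq Z'S ZS xZ' yZ'). Qed.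

Lemma in_spanP a : in_span S a <-> block_const S a.
Proof.
split=> [[c ->] Z ZS x y xZ yZ | Ca].
  by rewrite !ffunE; apply: eq_bigr => Z' Z'S; rewrite !ffunE (mem_block_eq ZS Z'S xZ yZ).
exists (fun Z => a (repr Z)); apply/ffunP => g; rewrite ffunE.
case/and3P: partS => _ trivS _.
rewrite (bigD1 (pblock S g)) ?pblockS //= big1 ?addr0 => [|Z /andP[ZS gZ']].
  rewrite ffunE mem_pblockS mulr1; apply: Ca (pblockS g) _ _ (mem_pblockS g) _.
  exact: mem_repr (mem_pblockS g).
rewrite ffunE; case: (boolP (g \in Z)) => gZ; last by rewrite mulr0.
by rewrite -(def_pblock trivS ZS gZ) eqxx in gZ'.
Qed.

Hypothesis S1 : [set 1%g] \in S.
Hypothesis mulS : forall X Y, X \in S -> Y \in S -> in_span S (zg_mul (und X) (und Y)).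

Lemma block_constM a b : block_const S a -> block_const S b -> block_const S (zg_mul a b).
Proof.
move=> /in_spanP[c Da] /in_spanP[d Db].
have Dab z : zg_mul a b z = \sum_(X in S) \sum_(Y in S)
    c X * d Y * zg_mul (und X) (und Y) z.
  rewrite Da Db /zg_mul !ffunE.
  under eq_bigr do rewrite !ffunE big_distrl.
  under eq_bigr do under eq_bigr do rewrite big_distrr.
  rewrite exchange_big; apply: eq_bigr => X _; rewrite exchange_big.
  apply: eq_bigr => Y _; rewrite ffunE mulr_sumr; apply: eq_bigr => x _.
  by rewrite !ffunE mulrACA.
move=> Z ZS x y xZ yZ; rewrite !Dab; apply: eq_bigr => X XS; apply: eq_bigr => Y YS.
by have /in_spanP CXY := mulS XS YS; rewrite (CXY Z ZS x y).
Qed.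

Lemma block_const_big I r (F : I -> ZG gT) :
  (forall i, block_const S (F i)) -> block_const S (\big[@zg_mul gT/e]_(i <- r) F i).
Proof. by move=> CF; apply: big_ind => //; [exact: und_block_const | exact: block_constM]. Qed.

Lemma block_multiplicative_big (R : pzSemiRingType) (psi : ZG gT -> R) I r
    (F : I -> ZG gT) :
    (forall a b, block_const S a -> block_const S b -> psi (zg_mul a b) = psi a * psi b) ->
    psi e = 1 -> (forall i, block_const S (F i)) ->
  psi (\big[@zg_mul gT/e]_(i <- r) F i) = \prod_(i <- r) psi (F i).
Proof.
move=> psiM psi1 CF; elim: r => [|i r IHr]; rewrite ?big_nil ?big_cons //.
by rewrite psiM ?IHr //; apply: block_const_big.
Qed.

Hypothesis centS : central_Sring S.

Lemma block_const_class a : block_const S a -> class_zg a.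
Proof.
move=> Ca g h; apply: Ca (pblockS g) _ _ _ (mem_pblockS g).
by rewrite (central_und_memJ (centS (pblockS g))) mem_pblockS.
Qed.

Lemma central_char_Irr i : is_Irr S (central_char i).
Proof.
split=> [a b _ _ | a b /in_spanP/block_const_class Ja _ | ]; first exact: raddfD.
  exact: central_charM.
exists e; first exact/in_spanP/und_block_const.
by rewrite central_char_und1 oner_eq0.
Qed.

Section IrrElement.
Variable phi : ZG gT -> algC.
Hypothesis phiIrr : is_Irr S phi.

Lemma Irr_blockD a b : block_const S a -> block_const S b -> phi (a + b) = phi a + phi b.
Proof. by case: phiIrr => phiD _ _ /in_spanP Ca /in_spanP Cb; apply: phiD. Qed.

Lemma Irr_blockM a b : block_const S a -> block_const S b ->
  phi (zg_mul a b) = phi a * phi b.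
Proof. by case: phiIrr => _ phiM _ /in_spanP Ca /in_spanP Cb; apply: phiM. Qed.

Lemma Irr_und1 : phi e = 1.
Proof.
case: phiIrr => _ _ [a /in_spanP Ca nz_a].
have := Irr_blockM (und_block_const S1) Ca; rewrite zg_mul1 -{1}[phi a]mul1r.
by move/(mulIf nz_a)/esym.
Qed.

Lemma Irr_rat_value a (q : Iirr [set: gT]%G -> rat) : block_const S a ->
  (forall i, central_char i a = ratr (q i)) -> exists i, phi a = ratr (q i).
Proof.
move=> Ca Dq; pose f i := a *~ denq (q i) - e *~ numq (q i).
have Ce := und_block_const S1.
have Cf i : block_const S (f i) by apply/block_constD/block_constN; apply: block_constMz.
have f_eq0 (psi : ZG gT -> algC) i : (forall a b, block_const S a -> block_const S b ->
    psi (a + b) = psi a + psi b) -> psi e = 1 -> (psi (f i) == 0) = (psi a == ratr (q i)).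
  move=> psiD psi1.
  rewrite psiD ?(block_additiveN psiD) ?(block_additiveMz psiD) ?psi1 ?subr_eq0
    ?mulrz_denq_eq //; by [apply/block_constN/block_constMz | apply: block_constMz].
pose b := \big[@zg_mul gT/e]_(i <- enum (Iirr [set: gT]%G)) f i.
have b0 : b = 0.
  apply: class_zg_eq0 => [|i]; first exact/block_const_class/block_const_big.
  rewrite (block_multiplicative_big (psi := central_char i)) ?central_char_und1 //; last first.
    by move=> a1 b1 /block_const_class Ja1 _; apply: central_charM.
  apply/eqP; rewrite prodf_seq_eq0; apply/hasP; exists i; first by rewrite mem_enum.
  by rewrite /= f_eq0 ?Dq ?central_char_und1 // => a1 b1 _ _; apply: raddfD.
have : phi b = \prod_(i <- enum (Iirr [set: gT]%G)) phi (f i).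
  exact: block_multiplicative_big Irr_blockM Irr_und1 Cf.
rewrite b0 (block_additive0 Irr_blockD) => /esym/eqP; rewrite prodf_seq_eq0.
case/hasP=> j _ /=.
by rewrite f_eq0 ?Irr_und1 //; [move/eqP; exists j | exact: Irr_blockD].
Qed.

End IrrElement.

End SRing.

Theorem theorem3p3 (gT : finGroupType) (S : {set {set gT}}) :
  is_Sring S -> central_Sring S ->
  (rational_Sring S <->
   forall phi : ZG gT -> algC, is_Irr S phi ->
     forall X, X \in S -> phi (und X) \in Crat).
Proof.
case=> partS S1 _ mulS centS; split=> [ratS phi phiIrr X XS | ratIrr X XS m com].
- have /fin_all_exists[q Dq] i : exists q, central_char i (und X) = ratr q.
    apply/CratP; rewrite /central_char irr_zg_und rpred_div ?irr_sum_rat //.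
      by move=> k cok; apply: (ratS X XS k).
    by rewrite irr1_degree rpred_nat.
  have [j ->] := Irr_rat_value partS S1 mulS centS phiIrr (und_block_const partS XS) Dq.
  exact: Crat_rat.
- have [k cok Dk] := zexpg_coprime com.
  rewrite /set_pow (eq_imset _ Dk); apply: expg_set_irr_rat => // [|i].
    exact: central_und_memJ (centS X XS).
  have := ratIrr _ (central_char_Irr partS S1 centS i) X XS.
  rewrite /central_char irr_zg_und => ratX.
  by rewrite -(divfK (irr1_neq0 i) (\sum_(x in X) _)) rpredM // irr1_degree rpred_nat.
Qed.
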